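(* Let $\mathcal S$ be any set of collections $S=\{(y_d^1,\pi^1),\dots,(y_d^k,\pi^k)\}$ (with $y_d^t$ distinct elements of $\mathbb Y_d$ and $\pi^t\in\mathcal P_\Pi\cup\mathcal R_\Pi$). The program $\min\ c_1x+\eta$ subject to $x\in\mathcal X$ and, for each $S\in\mathcal S$, variables $y_c^S\ge0$, $y_d^S\in\mathbb Y_d$, $u^S$ with $\eta\ge c_{2,c}y_c^S+c_{2,d}y_d^S$, $B_{2,c}y_c^S+B_{2,d}y_d^S+Eu^S\ge d-B_1x$, $(u^S,\cdot)\in\mathcal{OU}(x,S)$, is a relaxation of the two-stage robust problem, and its optimal value is at most $w^*$.
   Context: $\mathcal X=\{x\in\mathbb R^{n_x}_+\times\mathbb Z^{m_x}_+: Ax\ge b\}$; $\mathcal U(x)=\{u\in\mathbb R^{n_u}_+: F(x)u\le h+Gx\}$, nonempty and bounded for $x\in\mathcal X$; $\mathcal Y(x,u)=\{(y_c,y_d)\in\mathbb R^{n_y}_+\times\mathbb Y_d: B_{2,c}y_c+B_{2,d}y_d\ge d-B_1x-Eu\}$, $\mathbb Y_d\subseteq\mathbb Z^{m_y}_+$ finite; $w^*=\min_{x\in\mathcal X}\big[c_1x+\max_{u\in\mathcal U(x)}\min_{(y_c,y_d)\in\mathcal Y(x,u)}(c_{2,c}y_c+c_{2,d}y_d)\big]$ (minimum over empty set $=+\infty$); standing assumption $\min\{c_1x+c_{2,c}y_c+c_{2,d}y_d: x\in\mathcal X,u\in\mathcal U(x),(y_c,y_d)\in\mathcal Y(x,u)\}>-\infty$.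 $\Pi=\{\pi\ge0: B_{2,c}^\intercal\pi\le c_{2,c}^\intercal\}$ with extreme points $\mathcal P_\Pi$ and extreme rays $\mathcal R_\Pi$. For $S=\{(y_d^t,\pi^t)\}_{t=1}^k$, $\mathcal{OU}(x,S)$ is the set of $(u,\hat\eta,\lambda,\mu)$ with: $\hat\eta\le c_{2,d}y_d^t+(d-B_1x-Eu-B_{2,d}y_d^t)^\intercal\pi^t$ ($\forall t$); $F(x)u\le h+Gx$; $F(x)^\intercal\lambda+\sum_tE^\intercal\pi^t\mu^t\ge0$; $\sum_t\mu^t=1$; $\mu^t(c_{2,d}y_d^t+(d-B_1x-Eu-B_{2,d}y_d^t)^\intercal\pi^t-\hat\eta)=0$ ($\forall t$); $\lambda\circ(h+Gx-F(x)u)=0$; $u\circ(F(x)^\intercal\lambda+\sum_tE^\intercal\pi^t\mu^t)=0$; $u,\lambda,\mu\ge0$ ($\circ$ componentwise product). *)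

From HB Require Import structures.
From mathcomp Require Import all_boot all_order all_algebra.
From mathcomp Require Import all_classical all_reals ereal.
Unset Strict Implicit. Unset Printing Implicit Defensive.
Import Order.TTheory GRing.Theory Num.Theory.
Local Open Scope ring_scope.
Local Open Scope classical_set_scope.

(* Data of the two-stage robust problem.
   x lives in R^(nx+mx): first nx coordinates continuous, last mx integral.
   p = #rows of A, q = #rows of F(x), r = #rows of the second-stage system. *)
Set Implicit Arguments.
Record tsro_data (R : realType) (nx mx nu ny my p q r : nat) := TSRO {
  tA : 'M[R]_(p, nx + mx);  tb : 'cV[R]_p;
  tF : 'cV[R]_(nx + mx) -> 'M[R]_(q, nu);  th : 'cV[R]_q;  tG : 'M[R]_(q, nx + mx);
  tB1 : 'M[R]_(r, nx + mx);  tE : 'M[R]_(r, nu);  td : 'cV[R]_r;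
  tB2c : 'M[R]_(r, ny);  tB2d : 'M[R]_(r, my);
  tc1 : 'rV[R]_(nx + mx);  tc2c : 'rV[R]_ny;  tc2d : 'rV[R]_my;
  tYd : seq 'cV[R]_my
}.
Unset Implicit Arguments.

Section Defs.
Context {R : realType} {nx mx nu ny my p q r : nat}.
Implicit Type P : tsro_data R nx mx nu ny my p q r.

Definition mxle {m n : nat} (M N : 'M[R]_(m, n)) : Prop := forall i j, M i j <= N i j.
Definition nnegmx {m n : nat} (M : 'M[R]_(m, n)) : Prop := mxle 0 M.
Definition sc (M : 'M[R]_1) : R := M 0 0.

Definition inX P (x : 'cV[R]_(nx + mx)) : Prop :=
  nnegmx x /\ (forall j : 'I_mx, x (rshift nx j) 0 \is a Num.nat) /\
  mxle (tb P) (tA P *m x).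

Definition inU P x (u : 'cV[R]_nu) : Prop :=
  nnegmx u /\ mxle (tF P x *m u) (th P + tG P *m x).

Definition inY P x u (yc : 'cV[R]_ny) (yd : 'cV[R]_my) : Prop :=
  nnegmx yc /\ yd \in tYd P /\
  mxle (td P - tB1 P *m x - tE P *m u) (tB2c P *m yc + tB2d P *m yd).

Definition cost2 P (yc : 'cV[R]_ny) (yd : 'cV[R]_my) : R :=
  sc (tc2c P *m yc) + sc (tc2d P *m yd).

(* second-stage value  max_{u in U(x)} min_{y in Y(x,u)} c2 y  (inf of empty = +oo) *)
Definition Qval P x : \bar R :=
  ereal_sup [set z | exists u, inU P x u /\
    z = ereal_inf [set z' | exists yc yd, inY P x u yc yd /\ z' = (cost2 P yc yd)%:E]].

Definition wstar P : \bar R :=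
  ereal_inf [set z | exists x, inX P x /\ z = ((sc (tc1 P *m x))%:E + Qval P x)%E].

Definition inPi P (pi : 'cV[R]_r) : Prop :=
  nnegmx pi /\ mxle ((tB2c P)^T *m pi) (tc2c P)^T.

Definition extreme_point_Pi P (pi : 'cV[R]_r) : Prop :=
  inPi P pi /\ forall p1 p2 (t : R), inPi P p1 -> inPi P p2 -> 0 < t < 1 ->
    pi = t *: p1 + (1 - t) *: p2 -> p1 = p2.

Definition recc_Pi P (v : 'cV[R]_r) : Prop :=
  nnegmx v /\ mxle ((tB2c P)^T *m v) 0.

Definition extreme_ray_Pi P (v : 'cV[R]_r) : Prop :=
  recc_Pi P v /\ v <> 0 /\ forall v1 v2, recc_Pi P v1 -> recc_Pi P v2 ->
    v = v1 + v2 -> exists a : R, 0 <= a /\ v1 = a *: v.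

Definition valid_coll P (S : seq ('cV[R]_my * 'cV[R]_r)) : Prop :=
  (0 < size S)%N /\ uniq (map fst S) /\
  forall z, z \in S -> z.1 \in tYd P /\ (extreme_point_Pi P z.2 \/ extreme_ray_Pi P z.2).

Definition inOU P x (S : seq ('cV[R]_my * 'cV[R]_r)) (u : 'cV[R]_nu) (eh : R)
    (lam : 'cV[R]_q) (mu : 'I_(size S) -> R) : Prop :=
  let yt (t : 'I_(size S)) := (nth (0, 0) S t).1 in
  let pit (t : 'I_(size S)) := (nth (0, 0) S t).2 in
  let val t := sc (tc2d P *m yt t) +
               sc ((td P - tB1 P *m x - tE P *m u - tB2d P *m yt t)^T *m pit t) in
  let grad := (tF P x)^T *m lam + \sum_(t < size S) mu t *: ((tE P)^T *m pit t) in
  let slack := th P + tG P *m x - tF P x *m u in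
  (forall t, eh <= val t) /\
  mxle (tF P x *m u) (th P + tG P *m x) /\
  nnegmx grad /\
  \sum_(t < size S) mu t = 1 /\
  (forall t, mu t * (val t - eh) = 0) /\
  (forall i, lam i 0 * slack i 0 = 0) /\
  (forall i, u i 0 * grad i 0 = 0) /\
  nnegmx u /\ nnegmx lam /\ (forall t, 0 <= mu t).


Definition relax_feas P (SS : set (seq ('cV[R]_my * 'cV[R]_r))) x (eta : R) : Prop :=
  forall S, SS S -> exists (yc : 'cV[R]_ny) (yd : 'cV[R]_my) (u : 'cV[R]_nu)
    (eh : R) (lam : 'cV[R]_q) (mu : 'I_(size S) -> R),
    nnegmx yc /\ yd \in tYd P /\ cost2 P yc yd <= eta /\
    mxle (td P - tB1 P *m x) (tB2c P *m yc + tB2d P *m yd + tE P *m u) /\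
    inOU P x S u eh lam mu.

Definition relax_val_at P SS x : \bar R :=
  ereal_inf [set z | exists eta, relax_feas P SS x eta /\
                                 z = (sc (tc1 P *m x) + eta)%:E].

Definition relax_val P SS : \bar R :=
  ereal_inf [set z | exists x eta, inX P x /\ relax_feas P SS x eta /\
                                   z = (sc (tc1 P *m x) + eta)%:E].

Definition standing P : Prop :=
  (-oo < ereal_inf [set z | exists x u yc yd, inX P x /\ inU P x u /\
      inY P x u yc yd /\ z = (sc (tc1 P *m x) + cost2 P yc yd)%:E])%E.

End Defs.

From HB Require Import structures.
From mathcomp Require Import all_boot all_order all_algebra.
From mathcomp Require Import all_classical all_reals ereal.
From mathcomp Require Import ring lra.
Set Implicit Arguments.
Unset Strict Implicit.
Unset Printing Implicit Defensive.

Import Order.TTheory GRing.Theory Num.Theory.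
Local Open Scope ring_scope.

(* For a fixed first stage [x], any [(u, eta, lambda, mu)] in [OU(x,S)] has
   [u] in [U(x)], so for every [e > Q(x)] the inner minimum at [u] is below [e]
   and provides the recourse [(y_c^S, y_d^S)] making [(x, e)] feasible in the
   relaxation; minimising over [x] then gives the bound by [w*].
   The only real work is that [OU(x,S)] is nonempty: it is the set of KKT points
   of the linear program maximising [eta] over [u in U(x)] subject to
   [eta <= c_{2,d} y_d^t + (d - B_1 x - E u - B_{2,d} y_d^t)^T pi^t] for all [t],
   which is feasible and bounded because [U(x)] is nonempty and bounded. KKT
   points of such a program exist by LP duality, obtained from Farkas' lemma,
   itself proved by Fourier-Motzkin elimination. *)

Section FourierMotzkin.
Variable R : realFieldType.
Implicit Types (n : nat).

Definition dotv n (a x : 'rV[R]_n) : R := \sum_i a 0 i * x 0 i.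

Definition satisfies n (rows : seq ('rV[R]_n * R)) (x : 'rV[R]_n) : bool :=
  all (fun r : 'rV[R]_n * R => dotv r.1 x <= r.2) rows.

Inductive derivable n (rows : seq ('rV[R]_n * R)) : 'rV[R]_n -> R -> Prop :=
| derivable_row a b : (a, b) \in rows -> derivable rows a b
| derivable_add a1 b1 a2 b2 : derivable rows a1 b1 -> derivable rows a2 b2 ->
    derivable rows (a1 + a2) (b1 + b2)
| derivable_scale k a b : 0 <= k -> derivable rows a b -> derivable rows (k *: a) (k * b)
| derivable_weaken a b b' : derivable rows a b -> b <= b' -> derivable rows a b'.

Definition hdv n (a : 'rV[R]_n.+1) : R := a 0 ord0.
Definition tlv n (a : 'rV[R]_n.+1) : 'rV[R]_n := \row_j a 0 (lift ord0 j).
Definition extv n (a : 'rV[R]_n) x0 : 'rV[R]_n.+1 :=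
  \row_i (if unlift ord0 i is Some j then a 0 j else x0).

Lemma dotv_extv n (a : 'rV[R]_n.+1) x' x0 :
  dotv a (extv x' x0) = hdv a * x0 + dotv (tlv a) x'.
Proof.
rewrite /dotv big_ord_recl !mxE unlift_none; congr (_ + _).
by apply: eq_bigr => j _; rewrite !mxE liftK.
Qed.

Lemma extv_tlv n (a : 'rV[R]_n.+1) : hdv a = 0 -> extv (tlv a) 0 = a.
Proof.
move=> a0; apply/rowP => i; rewrite !mxE.
by case: unliftP => [j ->|->]; rewrite ?mxE.
Qed.

Lemma extv0 n : extv (0 : 'rV[R]_n) 0 = 0.
Proof. by apply/rowP => i; rewrite !mxE; case: unlift => [j|]; rewrite ?mxE. Qed.

Lemma extvD n (a b : 'rV[R]_n) : extv (a + b) 0 = extv a 0 + extv b 0.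
Proof. by apply/rowP => i; rewrite !mxE; case: unlift => [j|]; rewrite ?mxE ?addr0. Qed.

Lemma extvZ n k (a : 'rV[R]_n) : extv (k *: a) 0 = k *: extv a 0.
Proof. by apply/rowP => i; rewrite !mxE; case: unlift => [j|]; rewrite ?mxE ?mulr0. Qed.

Lemma tlvD n (a b : 'rV[R]_n.+1) : tlv (a + b) = tlv a + tlv b.
Proof. by apply/rowP => i; rewrite !mxE. Qed.

Lemma tlvZ n k (a : 'rV[R]_n.+1) : tlv (k *: a) = k *: tlv a.
Proof. by apply/rowP => i; rewrite !mxE. Qed.

Lemma dotvDl n (a b x : 'rV[R]_n) : dotv (a + b) x = dotv a x + dotv b x.
Proof. by rewrite /dotv -big_split; apply: eq_bigr => i _; rewrite !mxE mulrDl. Qed.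

Lemma dotvZl n k (a x : 'rV[R]_n) : dotv (k *: a) x = k * dotv a x.
Proof. by rewrite /dotv mulr_sumr; apply: eq_bigr => i _; rewrite !mxE mulrA. Qed.

Lemma exists_between (s t : seq R) :
    (forall a b, a \in s -> b \in t -> b <= a) ->
  exists x0, (forall a, a \in s -> x0 <= a) /\ (forall b, b \in t -> b <= x0).
Proof.
case: t => [|b0 t] st.
  by exists (\big[Num.min/0]_(a <- s) a); split=> // a sa; apply: ge_bigmin_seq.
exists (\big[Num.max/b0]_(b <- b0 :: t) b); split=> [a sa|b tb].
  by rewrite big_seq; apply: bigmax_le => [|b tb]; apply: st; rewrite ?inE ?eqxx.
exact: le_bigmax_seq.
Qed.

Section Elimination.
Variables (n : nat) (rows : seq ('rV[R]_n.+1 * R)).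

Definition pos_rows := [seq r <- rows | 0 < hdv r.1].
Definition neg_rows := [seq r <- rows | hdv r.1 < 0].

(* The positive combination of [p] and [m] in which the first variable cancels. *)
Definition combv (p m : 'rV[R]_n.+1 * R) : 'rV[R]_n * R :=
  (tlv ((- hdv m.1) *: p.1 + hdv p.1 *: m.1), (- hdv m.1) * p.2 + hdv p.1 * m.2).

Definition elim_rows : seq ('rV[R]_n * R) :=
  [seq (tlv r.1, r.2) | r <- rows & hdv r.1 == 0] ++
  [seq combv p m | p <- pos_rows, m <- neg_rows].

Lemma derivable_elim_rows a b :
  derivable elim_rows a b -> derivable rows (extv a 0) b.
Proof.
elim=> {a b} [a b|a1 b1 a2 b2 _ IH1 _ IH2|k a b k0 _ IH|a b b' _ IH bb'].
- rewrite mem_cat => /orP[/mapP[r]|/allpairsP[[pr mr] [/= prP mrN [-> ->]]]].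
    rewrite mem_filter => /andP[/eqP r0 rin] [-> ->]; rewrite extv_tlv //.
    by apply: derivable_row; rewrite -surjective_pairing.
  move: prP mrN; rewrite !mem_filter => /andP[hp prin] /andP[hm mrin].
  rewrite extv_tlv; last by rewrite /hdv !mxE; ring.
  apply: derivable_add; apply: derivable_scale; rewrite ?oppr_ge0 ?ltW //;
    by apply: derivable_row; rewrite -surjective_pairing.
- by rewrite extvD; apply: derivable_add.
- by rewrite extvZ; apply: derivable_scale.
- exact: derivable_weaken bb'.
Qed.

Variable x' : 'rV[R]_n.

(* The value of the first variable at which row [r] becomes tight. *)
Definition threshold (r : 'rV[R]_n.+1 * R) : R := (r.2 - dotv (tlv r.1) x') / hdv r.1.

Lemma dotv_extv_le_pos r x0 :
  0 < hdv r.1 -> (dotv r.1 (extv x' x0) <= r.2) = (x0 <= threshold r).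
Proof. by move=> hr; rewrite dotv_extv ler_pdivlMr // mulrC -lerBrDr. Qed.

Lemma dotv_extv_le_neg r x0 :
  hdv r.1 < 0 -> (dotv r.1 (extv x' x0) <= r.2) = (threshold r <= x0).
Proof. by move=> hr; rewrite dotv_extv ler_ndivrMr // mulrC -lerBrDr. Qed.

Lemma threshold_combv pr mr : 0 < hdv pr.1 -> hdv mr.1 < 0 ->
  dotv (combv pr mr).1 x' <= (combv pr mr).2 -> threshold mr <= threshold pr.
Proof.
move=> hp hm; rewrite /combv /= tlvD !tlvZ dotvDl !dotvZl => sat.
have hpm : 0 < hdv pr.1 * - hdv mr.1 by rewrite mulr_gt0 // oppr_gt0.
rewrite -subr_ge0 -(pmulr_rge0 _ hpm).
have -> : hdv pr.1 * - hdv mr.1 * (threshold pr - threshold mr) =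
    (- hdv mr.1 * pr.2 + hdv pr.1 * mr.2) -
    (- hdv mr.1 * dotv (tlv pr.1) x' + hdv pr.1 * dotv (tlv mr.1) x').
  have [hp0 hm0] := (gt_eqF hp, lt_eqF hm).
  by rewrite /threshold; field; rewrite hp0 hm0.
by rewrite subr_ge0.
Qed.

Lemma satisfies_elim_rows :
  satisfies elim_rows x' -> exists x0, satisfies rows (extv x' x0).
Proof.
move=> /allP sat.
have [|x0 [le_pos ge_neg]] :=
  @exists_between [seq threshold r | r <- pos_rows] [seq threshold r | r <- neg_rows].
  move=> _ _ /mapP[pr prP ->] /mapP[mr mrN ->].
  move: (prP) (mrN); rewrite !mem_filter => /andP[hp _] /andP[hm _].
  by apply: threshold_combv => //; apply: sat; rewrite mem_cat allpairs_f ?orbT.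
exists x0; apply/allP => r rin; case: (ltrgtP (hdv r.1) 0) => hr.
- by rewrite dotv_extv_le_neg // ge_neg // map_f // mem_filter hr.
- by rewrite dotv_extv_le_pos // le_pos // map_f // mem_filter hr.
- rewrite dotv_extv hr mul0r add0r; apply: (sat (tlv r.1, r.2)).
  by rewrite mem_cat map_f // mem_filter hr eqxx.
Qed.

End Elimination.

Theorem farkas_derivable n (rows : seq ('rV[R]_n * R)) :
  (forall x, ~~ satisfies rows x) -> derivable rows 0 (-1).
Proof.
elim: n rows => [|n IH] rows infeas.
  move: (infeas 0); rewrite -has_predC => /hasP[[a b] ab] /=.
  rewrite /dotv big_ord0 -ltNge (thinmx0 a) in ab * => b_lt0.
  have k_ge0 : 0 <= - b^-1 by rewrite oppr_ge0 invr_le0 ltW.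
  have := derivable_scale k_ge0 (derivable_row ab).
  by rewrite scaler0 mulNr mulVf ?lt_eqF.
rewrite -(extv0 n); apply/derivable_elim_rows/IH => x'.
by apply/negP => /satisfies_elim_rows[x0]; apply/negP/infeas.
Qed.

End FourierMotzkin.

Section Sums.
Variables (R : pzSemiRingType) (T : finType).
Implicit Types (f g h : T -> R).

Lemma sum_mul0l h : \sum_t 0 * h t = 0.
Proof. by rewrite big1 // => t _; rewrite mul0r. Qed.

Lemma sum_delta_mull t0 h : \sum_t (t == t0)%:R * h t = h t0.
Proof.
rewrite (bigD1 t0) //= eqxx mul1r big1 ?addr0 // => t /negbTE ->.
by rewrite mul0r.
Qed.

Lemma sum_mulDl f g h : \sum_t (f t + g t) * h t = \sum_t f t * h t + \sum_t g t * h t.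
Proof. by rewrite -big_split; apply: eq_bigr => t _; rewrite mulrDl. Qed.

Lemma sum_mulAl k f h : \sum_t (k * f t) * h t = k * \sum_t f t * h t.
Proof. by rewrite mulr_sumr; apply: eq_bigr => t _; rewrite mulrA. Qed.

End Sums.

Lemma sum_mul_exchange (R : comPzRingType) (I V : finType) (A : I -> V -> R)
    (f : I -> R) (g : V -> R) :
  \sum_(i : I) f i * (\sum_(v : V) A i v * g v) = \sum_v g v * (\sum_i f i * A i v).
Proof.
under eq_bigr do rewrite mulr_sumr.
rewrite exchange_big; apply: eq_bigr => v _; rewrite mulr_sumr.
by apply: eq_bigr => i _; rewrite [RHS]mulrC -mulrA.
Qed.

Section LinearProgramDuality.
Variables (R : realFieldType) (V I : finType).
Variables (A : I -> V -> R) (b : I -> R) (c : V -> R).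

Definition lp_feasible (z : V -> R) : Prop := forall i, \sum_v A i v * z v <= b i.

Definition lp_kkt (z : V -> R) (y : I -> R) : Prop :=
  [/\ lp_feasible z, forall i, 0 <= y i, forall v, \sum_i y i * A i v = c v &
      forall i, y i * (b i - \sum_v A i v * z v) = 0].

Lemma complementary_slackness z y : lp_feasible z -> (forall i, 0 <= y i) ->
    (forall v, \sum_i y i * A i v = c v) -> \sum_i y i * b i <= \sum_v c v * z v ->
  lp_kkt z y.
Proof.
move=> zF y_ge0 yA dual_le; split=> //.
have slack_ge0 i : 0 <= y i * (b i - \sum_v A i v * z v).
  by rewrite mulr_ge0 // subr_ge0.
move=> i0; apply: (@psumr_eq0P _ _ xpredT _ (fun i _ => slack_ge0 i)) => //.
apply/le_anti; rewrite sumr_ge0 // andbT.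
under eq_bigr do rewrite mulrBr.
rewrite sumrB sum_mul_exchange subr_le0.
by under [X in _ <= X]eq_bigr do rewrite yA mulrC.
Qed.

Local Notation W := (V + I)%type.
Local Notation N := #|{: W}|.

(* Points of the combined primal-dual space [R^V x R^I] are encoded as rows of
   length [#|V + I|] through [enum_rank]. *)
Definition primal (x : 'rV[R]_N) (v : V) : R := x 0 (enum_rank (inl v)).
Definition dual (x : 'rV[R]_N) (i : I) : R := x 0 (enum_rank (inr i)).

Definition rowvp (fz : V -> R) (fy : I -> R) : 'rV[R]_N :=
  \row_k (match enum_val k with inl v => fz v | inr i => fy i end).

Lemma primal_rowvp fz fy v : primal (rowvp fz fy) v = fz v.
Proof. by rewrite /primal mxE enum_rankK. Qed.

Lemma dual_rowvp fz fy i : dual (rowvp fz fy) i = fy i.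
Proof. by rewrite /dual mxE enum_rankK. Qed.

Lemma primalD a1 a2 v : primal (a1 + a2) v = primal a1 v + primal a2 v.
Proof. by rewrite /primal mxE. Qed.

Lemma primalZ k a v : primal (k *: a) v = k * primal a v.
Proof. by rewrite /primal mxE. Qed.

Lemma dualD a1 a2 i : dual (a1 + a2) i = dual a1 i + dual a2 i.
Proof. by rewrite /dual mxE. Qed.

Lemma dualZ k a i : dual (k *: a) i = k * dual a i.
Proof. by rewrite /dual mxE. Qed.

Lemma dotv_rowvp fz fy x :
  dotv (rowvp fz fy) x = \sum_v fz v * primal x v + \sum_i fy i * dual x i.
Proof.
rewrite /dotv (reindex (@enum_rank W)) /=; last first.
  by exists enum_val => k _; rewrite ?enum_rankK ?enum_valK.
by rewrite big_sumType; congr (_ + _); apply: eq_bigr => t _; rewrite mxE enum_rankK.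
Qed.

(* Primal feasibility, dual feasibility and the reverse of weak duality,
   [b.y <= c.z]: a solution is a primal-dual pair with no duality gap. *)
Definition lp_rows : seq ('rV[R]_N * R) :=
  [seq (rowvp (A i) (fun=> 0), b i) | i <- enum I] ++
  [seq (rowvp (fun=> 0) (A^~ v), c v) | v <- enum V] ++
  [seq (rowvp (fun=> 0) (fun i => - A i v), - c v) | v <- enum V] ++
  [seq (rowvp (fun=> 0) (fun i => - (i == i0)%:R), 0) | i0 <- enum I] ++
  [:: (rowvp (fun v => - c v) b, 0)].

Lemma satisfies_lp_rows x : satisfies lp_rows x -> lp_kkt (primal x) (dual x).
Proof.
move=> /allP sat.
have feas : lp_feasible (primal x).
  move=> i; have := sat (rowvp (A i) (fun=> 0), b i).
  by rewrite dotv_rowvp sum_mul0l addr0; apply; rewrite !mem_cat map_f ?mem_enum.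
have dual_eq v : \sum_i dual x i * A i v = c v.
  have := sat (rowvp (fun=> 0) (A^~ v), c v).
  have := sat (rowvp (fun=> 0) (fun i => - A i v), - c v).
  rewrite !dotv_rowvp !sum_mul0l !add0r !mem_cat !map_f ?mem_enum ?orbT //.
  under eq_bigr do rewrite mulNr; rewrite sumrN lerN2 => /(_ isT) ge /(_ isT) le.
  by under eq_bigr do rewrite mulrC; apply/le_anti; rewrite ge le.
have dual_ge0 i0 : 0 <= dual x i0.
  have := sat (rowvp (fun=> 0) (fun i => - (i == i0)%:R), 0).
  rewrite dotv_rowvp sum_mul0l add0r !mem_cat map_f ?mem_enum ?orbT //.
  by under eq_bigr do rewrite mulNr; rewrite sumrN sum_delta_mull oppr_le0; apply.
apply: complementary_slackness => //.
have := sat (rowvp (fun v => - c v) b, 0).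
rewrite dotv_rowvp !mem_cat mem_seq1 eqxx !orbT.
under eq_bigr do rewrite mulNr; rewrite sumrN addrC subr_le0.
by under eq_bigr do rewrite mulrC; apply.
Qed.

(* A derivation from [lp_rows] uses multipliers [al] on the primal rows, [w] on
   the dual equations (of either sign), [be] on [y >= 0] and [g] on the
   objective row. *)
Inductive lp_cert (a : 'rV[R]_N) (beta : R) : Prop :=
  LpCert (al be : I -> R) (w : V -> R) (g : R) of
    (forall i, 0 <= al i) & (forall i, 0 <= be i) & 0 <= g &
    (forall v, primal a v = \sum_i al i * A i v - g * c v) &
    (forall i, dual a i = \sum_v w v * A i v - be i + g * b i) &
    \sum_i al i * b i + \sum_v w v * c v <= beta.

Lemma lp_cert_row r : r \in lp_rows -> lp_cert r.1 r.2.
Proof.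
rewrite !mem_cat => /or4P[| | |/orP[]].
- case/mapP => i0 _ ->; exists (fun i => (i == i0)%:R) (fun=> 0) (fun=> 0) 0 => //=.
  + by move=> v; rewrite primal_rowvp sum_delta_mull mul0r subr0.
  + by move=> i; rewrite dual_rowvp sum_mul0l mul0r !addr0 subr0.
  + by rewrite sum_delta_mull sum_mul0l addr0.
- case/mapP => v0 _ ->; exists (fun=> 0) (fun=> 0) (fun v => (v == v0)%:R) 0 => //=.
  + by move=> v; rewrite primal_rowvp sum_mul0l mul0r subr0.
  + by move=> i; rewrite dual_rowvp sum_delta_mull mul0r subr0 addr0.
  + by rewrite sum_delta_mull sum_mul0l add0r.
- case/mapP => v0 _ ->; exists (fun=> 0) (fun=> 0) (fun v => - (v == v0)%:R) 0 => //=.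
  + by move=> v; rewrite primal_rowvp sum_mul0l mul0r subr0.
  + move=> i; rewrite dual_rowvp mul0r subr0 addr0.
    by under eq_bigr do rewrite mulNr; rewrite sumrN sum_delta_mull.
  + rewrite sum_mul0l add0r.
    by under eq_bigr do rewrite mulNr; rewrite sumrN sum_delta_mull.
- case/mapP => i0 _ ->; exists (fun=> 0) (fun i => (i == i0)%:R) (fun=> 0) 0 => //=.
  + by move=> v; rewrite primal_rowvp sum_mul0l mul0r subr0.
  + by move=> i; rewrite dual_rowvp sum_mul0l mul0r addr0 add0r.
  + by rewrite !sum_mul0l addr0.
- rewrite mem_seq1 => /eqP ->; exists (fun=> 0) (fun=> 0) (fun=> 0) 1 => //=.
  + by move=> v; rewrite primal_rowvp sum_mul0l mul1r add0r.
  + by move=> i; rewrite dual_rowvp sum_mul0l mul1r subr0 add0r.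
  + by rewrite !sum_mul0l addr0.
Qed.

Lemma lp_certD a1 b1 a2 b2 :
  lp_cert a1 b1 -> lp_cert a2 b2 -> lp_cert (a1 + a2) (b1 + b2).
Proof.
case=> al1 be1 w1 g1 ? ? ? e11 e12 s1 [al2 be2 w2 g2 ? ? ? e21 e22 s2].
exists (fun i => al1 i + al2 i) (fun i => be1 i + be2 i) (fun v => w1 v + w2 v) (g1 + g2).
- by move=> i; rewrite addr_ge0.
- by move=> i; rewrite addr_ge0.
- exact: addr_ge0.
- by move=> v; rewrite primalD e11 e21 sum_mulDl; ring.
- by move=> i; rewrite dualD e12 e22 sum_mulDl; ring.
- by rewrite !sum_mulDl; lra.
Qed.

Lemma lp_certZ k a beta : 0 <= k -> lp_cert a beta -> lp_cert (k *: a) (k * beta).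
Proof.
move=> k_ge0 [al be w g ? ? ? e1 e2 s].
exists (fun i => k * al i) (fun i => k * be i) (fun v => k * w v) (k * g).
- by move=> i; rewrite mulr_ge0.
- by move=> i; rewrite mulr_ge0.
- exact: mulr_ge0.
- by move=> v; rewrite primalZ e1 sum_mulAl; ring.
- by move=> i; rewrite dualZ e2 sum_mulAl; ring.
- by rewrite !sum_mulAl -mulrDr ler_wpM2l.
Qed.

Lemma derivable_lp_cert a beta : derivable lp_rows a beta -> lp_cert a beta.
Proof.
elim=> {a beta} [a beta /lp_cert_row //|? ? ? ? _ cert1 _ cert2|? ? ? k_ge0 _ cert|
  a beta beta' _ [al be w g ? ? ? e1 e2 s] le_beta].
- exact: lp_certD.
- exact: lp_certZ.
- by exists al be w g => //; apply: le_trans le_beta.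
Qed.

Lemma lp_cert_duality al be w g :
    (forall v, \sum_i al i * A i v = g * c v) ->
    (forall i, \sum_v A i v * w v = be i - g * b i) ->
  g * (\sum_i al i * b i + \sum_v w v * c v) = \sum_i al i * be i.
Proof.
move=> alA Aw.
have lhs : \sum_i al i * (\sum_v A i v * w v) =
    \sum_i al i * be i - g * \sum_i al i * b i.
  by rewrite mulr_sumr -sumrB; apply: eq_bigr => i _; rewrite Aw; ring.
have rhs : \sum_v w v * (\sum_i al i * A i v) = g * \sum_v w v * c v.
  by rewrite mulr_sumr; apply: eq_bigr => v _; rewrite alA; ring.
by have := sum_mul_exchange A al w; rewrite lhs rhs mulrDr => <-; ring.
Qed.

Hypothesis lp_feasible_ex : exists z0, lp_feasible z0.
Hypothesis lp_bounded : exists K, forall z, lp_feasible z -> \sum_v c v * z v <= K.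

Lemma lp_no_improving_ray d :
  (forall i, \sum_v A i v * d v <= 0) -> \sum_v c v * d v <= 0.
Proof.
move=> Ad_le0; rewrite leNgt; apply/negP => cd_gt0.
have [z0 z0F] := lp_feasible_ex; have [K objK] := lp_bounded.
pose t := (`|K - \sum_v c v * z0 v| + 1) / \sum_v c v * d v.
have t_ge0 : 0 <= t by rewrite divr_ge0 ?ltW // addr_ge0 ?ler01.
have lin (f : V -> R) : \sum_v f v * (z0 v + t * d v) =
    \sum_v f v * z0 v + t * \sum_v f v * d v.
  by rewrite mulr_sumr -big_split; apply: eq_bigr => v _; rewrite mulrDr mulrCA.
have ztF : lp_feasible (fun v => z0 v + t * d v).
  move=> i; rewrite lin; have := z0F i; have := ler_wpM2l t_ge0 (Ad_le0 i).
  by rewrite mulr0; lra.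
have := objK _ ztF; rewrite lin.
have -> : t * \sum_v c v * d v = `|K - \sum_v c v * z0 v| + 1.
  by rewrite mulrVK ?unitfE ?gt_eqF.
by have := ler_norm (K - \sum_v c v * z0 v); lra.
Qed.

Lemma no_lp_cert : ~ lp_cert 0 (-1).
Proof.
case=> al be w g al_ge0 be_ge0 g_ge0 eA eb sum_le.
have alA v : \sum_i al i * A i v = g * c v.
  by have := eA v; rewrite /primal mxE; lra.
have Aw i : \sum_v A i v * w v = be i - g * b i.
  have := eb i; rewrite /dual mxE; under eq_bigr do rewrite mulrC; lra.
have duality := lp_cert_duality alA Aw.
have albe_ge0 : 0 <= \sum_i al i * be i by rewrite sumr_ge0 // => i _; rewrite mulr_ge0.
(* If [g > 0] the identity contradicts [al.be >= 0]; if [g = 0] then [-w] is an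
   improving ray. *)
have [g_eq0|g_gt0] := eqVneq g 0; last first.
  have {}g_gt0 : 0 < g by rewrite lt_def g_gt0.
  by nra.
have alb_ge0 : 0 <= \sum_i al i * b i.
  have [z0 z0F] := lp_feasible_ex.
  apply: (@le_trans _ _ (\sum_i al i * (\sum_v A i v * z0 v))).
    rewrite sum_mul_exchange big1 // => v _.
    by rewrite alA g_eq0 mul0r mulr0.
  by apply: ler_sum => i _; apply: ler_wpM2l.
have neg_sum (f : V -> R) : \sum_v f v * - w v = - \sum_v f v * w v.
  by rewrite -sumrN; apply: eq_bigr => v _; rewrite mulrN.
have wc_ge0 : 0 <= \sum_v w v * c v.
  under eq_bigr do rewrite mulrC.
  rewrite -oppr_le0 -neg_sum; apply: lp_no_improving_ray => i.
  by rewrite neg_sum oppr_le0 Aw g_eq0 mul0r subr0.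
lra.
Qed.

Theorem lp_kkt_exists : exists z y, lp_kkt z y.
Proof.
apply: contrapT => no_kkt; apply: no_lp_cert; apply: derivable_lp_cert.
apply: farkas_derivable => x; apply/negP => /satisfies_lp_rows kkt.
by apply: no_kkt; exists (primal x), (dual x).
Qed.

End LinearProgramDuality.

Section OptimalityConditions.
Variables (R : realType) (nx mx nu ny my p q r : nat).
Variables (P : tsro_data R nx mx nu ny my p q r) (x : 'cV[R]_(nx + mx)).
Variable S : seq ('cV[R]_my * 'cV[R]_r).

Local Notation yt t := (nth (0, 0) S t).1.
Local Notation pit t := (nth (0, 0) S t).2.

Definition ou_coef (t : 'I_(size S)) : 'cV[R]_nu := (tE P)^T *m pit t.

Definition ou_const (t : 'I_(size S)) : R :=
  sc (tc2d P *m yt t) + sc ((td P - tB1 P *m x - tB2d P *m yt t)^T *m pit t).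

Lemma ou_val_affine (t : 'I_(size S)) u :
  sc (tc2d P *m yt t) +
    sc ((td P - tB1 P *m x - tE P *m u - tB2d P *m yt t)^T *m pit t) =
  ou_const t - \sum_j u j 0 * ou_coef t j 0.
Proof.
rewrite [_ - tE P *m u - _]addrAC linearB /= mulmxBl trmx_mul -mulmxA.
rewrite /ou_const /sc !mxE.
by rewrite addrA; congr (_ - _); apply: eq_bigr => j _; rewrite !mxE.
Qed.

Local Notation ouV := ('I_nu + 'I_1)%type.
Local Notation ouI := ('I_(size S) + ('I_q + 'I_nu))%type.

(* [OU(x,S)] is the set of KKT points of the linear program
   [max eta  s.t.  eta + u^T ou_coef t <= ou_const t,  F(x) u <= h + G x,  -u <= 0]
   in the variables [(u, eta)]. *)
Definition ou_A (i : ouI) (v : ouV) : R :=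
  match i, v with
  | inl t, inl j => ou_coef t j 0
  | inl _, inr _ => 1
  | inr (inl k), inl j => tF P x k j
  | inr (inr j'), inl j => - (j == j')%:R
  | inr _, inr _ => 0
  end.

Definition ou_b (i : ouI) : R :=
  match i with
  | inl t => ou_const t
  | inr (inl k) => (th P + tG P *m x) k 0
  | inr (inr _) => 0
  end.

Definition ou_c (v : ouV) : R := if v is inr _ then 1 else 0.

Lemma sum_ouV (f : ouV -> R) : \sum_v f v = \sum_j f (inl j) + f (inr ord0).
Proof. by rewrite big_sumType big_ord1. Qed.

Lemma ou_A_piece t (z : ouV -> R) :
  \sum_v ou_A (inl t) v * z v = \sum_j ou_coef t j 0 * z (inl j) + z (inr ord0).
Proof. by rewrite sum_ouV /= mul1r. Qed.

Lemma ou_A_constr k (z : ouV -> R) :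
  \sum_v ou_A (inr (inl k)) v * z v = \sum_j tF P x k j * z (inl j).
Proof. by rewrite sum_ouV /= mul0r addr0. Qed.

Lemma ou_A_sign j (z : ouV -> R) : \sum_v ou_A (inr (inr j)) v * z v = - z (inl j).
Proof.
rewrite sum_ouV /= mul0r addr0.
by under eq_bigr do rewrite mulNr; rewrite sumrN sum_delta_mull.
Qed.

Lemma ou_A_col j (y : ouI -> R) :
  \sum_i y i * ou_A i (inl j) =
  \sum_t y (inl t) * ou_coef t j 0 + \sum_k y (inr (inl k)) * tF P x k j
    - y (inr (inr j)).
Proof.
rewrite !big_sumType /= addrA; congr (_ + _).
under eq_bigr do rewrite mulrN mulrC eq_sym.
by rewrite sumrN sum_delta_mull.
Qed.

Lemma ou_A_eta (y : ouI -> R) : \sum_i y i * ou_A i (inr ord0) = \sum_t y (inl t).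
Proof.
rewrite !big_sumType /=.
under [X in _ + (X + _)]eq_bigr do rewrite mulr0.
under [X in _ + (_ + X)]eq_bigr do rewrite mulr0.
by rewrite !big1_eq !addr0; under eq_bigr do rewrite mulr1.
Qed.

Lemma ou_obj (z : ouV -> R) : \sum_v ou_c v * z v = z (inr ord0).
Proof. by rewrite sum_ouV big1 ?add0r ?mul1r // => j _; rewrite mul0r. Qed.

Lemma ou_lp_feasible : (exists u, inU P x u) -> exists z, lp_feasible ou_A ou_b z.
Proof.
case=> u [u_ge0 Fu_le].
pose slack t := ou_const t - \sum_j ou_coef t j 0 * u j 0.
exists (fun v => if v is inl j then u j 0 else \big[Num.min/0]_t slack t).
case=> [t|[k|j]].
- by rewrite ou_A_piece /= -lerBrDl; apply: bigmin_le.
- by rewrite ou_A_constr /=; have := Fu_le k 0; rewrite mxE.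
- by rewrite ou_A_sign oppr_le0; have := u_ge0 j 0; rewrite mxE.
Qed.

Lemma inU_of_lp_feasible z :
  lp_feasible ou_A ou_b z -> inU P x (\col_j z (inl j)).
Proof.
move=> zF; split=> [j|k] o; rewrite ord1.
  rewrite !mxE; by have := zF (inr (inr j)); rewrite ou_A_sign oppr_le0.
rewrite mxE; under eq_bigr do rewrite mxE.
by have := zF (inr (inl k)); rewrite ou_A_constr.
Qed.

Lemma ou_lp_bounded : (0 < size S)%N ->
    (exists M, forall u, inU P x u -> forall j, `|u j 0| <= M) ->
  exists K, forall z, lp_feasible ou_A ou_b z -> \sum_v ou_c v * z v <= K.
Proof.
move=> S_gt0 [M boundM]; pose t0 : 'I_(size S) := Ordinal S_gt0.
exists (`|ou_const t0| + \sum_j `|ou_coef t0 j 0| * M) => z zF; rewrite ou_obj.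
have u_le := boundM _ (inU_of_lp_feasible zF).
have : - \sum_j ou_coef t0 j 0 * z (inl j) <= \sum_j `|ou_coef t0 j 0| * M.
  rewrite -sumrN; apply: ler_sum => j _; apply: le_trans (ler_norm _) _.
  by rewrite normrN normrM ler_wpM2l //; have := u_le j; rewrite mxE.
have := zF (inl t0); rewrite ou_A_piece /=.
by have := ler_norm (ou_const t0); lra.
Qed.

Lemma inOU_of_lp_kkt z y : lp_kkt ou_A ou_b ou_c z y ->
  inOU P x S (\col_j z (inl j)) (z (inr ord0)) (\col_k y (inr (inl k))) (y \o inl).
Proof.
case=> zF y_ge0 dual_eq slack0.
set u := \col_j z (inl j); set lam := \col_k y (inr (inl k)).
have [u_ge0 Fu_le] := inU_of_lp_feasible zF.
have uc t : \sum_j u j 0 * ou_coef t j 0 = \sum_j ou_coef t j 0 * z (inl j).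
  by apply: eq_bigr => j _; rewrite mxE mulrC.
have Fu k : (tF P x *m u) k 0 = \sum_j tF P x k j * z (inl j).
  by rewrite mxE; apply: eq_bigr => j _; rewrite mxE.
have grad j : ((tF P x)^T *m lam + \sum_t y (inl t) *: ((tE P)^T *m pit t)) j 0 =
    y (inr (inr j)).
  have /eqP := dual_eq (inl j); rewrite ou_A_col subr_eq0 => /eqP <-.
  rewrite !mxE summxE addrC; congr (_ + _).
    by apply: eq_bigr => t _; rewrite mxE.
  by apply: eq_bigr => k _; rewrite !mxE mulrC.
rewrite /inOU /=; split.
  move=> t; rewrite ou_val_affine uc.
  by have := zF (inl t); rewrite ou_A_piece /=; lra.
split=> //; split.
  by move=> j o; rewrite ord1 [_ 0 j _]mxE grad.
split; first by have := dual_eq (inr ord0); rewrite ou_A_eta.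
split.
  move=> t; rewrite /= ou_val_affine uc.
  by have := slack0 (inl t); rewrite ou_A_piece opprD addrA.
split.
  move=> k; have -> : (th P + tG P *m x - tF P x *m u) k 0 =
      (th P + tG P *m x) k 0 - (tF P x *m u) k 0.
    by rewrite [LHS]mxE; congr (_ + _); rewrite mxE.
  by rewrite Fu mxE; have := slack0 (inr (inl k)); rewrite ou_A_constr.
split.
  move=> j; rewrite grad mxE mulrC.
  by have := slack0 (inr (inr j)); rewrite ou_A_sign sub0r opprK.
split=> //; split=> [k o|t]; last exact: y_ge0.
by rewrite ord1 !mxE.
Qed.

Lemma inOU_exists : (exists u, inU P x u) ->
    (exists M, forall u, inU P x u -> forall j, `|u j 0| <= M) -> (0 < size S)%N ->
  exists u eh lam mu, inOU P x S u eh lam mu.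
Proof.
move=> U_ne U_bd S_gt0.
have [z [y kkt]] := lp_kkt_exists (ou_lp_feasible U_ne) (ou_lp_bounded S_gt0 U_bd).
by do 4 eexists; apply: inOU_of_lp_kkt kkt.
Qed.

End OptimalityConditions.

Local Open Scope classical_set_scope.

Lemma lee_EFinD_gt (R : realType) (v a : \bar R) (c : R) :
  (forall e : R, (a < e%:E)%E -> (v <= (c + e)%:E)%E) -> (v <= c%:E + a)%E.
Proof.
case: a => [a| |] v_le.
- rewrite -EFinD; apply/lee_addgt0Pr => eps eps_gt0.
  by rewrite -EFinD -addrA; apply: v_le; rewrite lte_fin; lra.
- by rewrite addey // leey.
- rewrite addeNy; case: v v_le => [v| |] v_le //.
    by exfalso; have := v_le (v - c - 1)%R (ltNyr _); rewrite lee_fin; lra.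
  by have := v_le 0 (ltNyr _).
Qed.

Section Relaxation.
Variables (R : realType) (nx mx nu ny my p q r : nat).
Variables (P : tsro_data R nx mx nu ny my p q r) (SS : set (seq ('cV[R]_my * 'cV[R]_r))).

Lemma inU_of_inOU x S u eh lam mu : inOU P x S u eh lam mu -> inU P x u.
Proof. by case=> _ [Fu_le [_ [_ [_ [_ [_ [u_ge0 _]]]]]]]. Qed.

Lemma relax_feas_gt_Qval x e :
    (forall S, SS S -> exists u eh lam mu, inOU P x S u eh lam mu) ->
  (Qval P x < e%:E)%E -> relax_feas P SS x e.
Proof.
move=> OU_ne Qx_lt S SS_S; have [u [eh [lam [mu uOU]]]] := OU_ne S SS_S.
have : (ereal_inf [set z | exists yc yd, inY P x u yc yd /\ z = (cost2 P yc yd)%:E]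
         < e%:E)%E.
  apply: le_lt_trans Qx_lt; apply: ereal_sup_ubound.
  by exists u; split=> //; apply: inU_of_inOU uOU.
case/ereal_inf_lt => _ [yc [yd [[yc_ge0 [ydY yY]] ->]]]; rewrite lte_fin => cost_lt.
exists yc, yd, u, eh, lam, mu; split=> //; split=> //; split; first exact: ltW.
by split=> // i j; have := yY i j; rewrite !mxE; lra.
Qed.

Lemma relax_val_at_le x :
    (forall S, SS S -> exists u eh lam mu, inOU P x S u eh lam mu) ->
  (relax_val_at P SS x <= (sc (tc1 P *m x))%:E + Qval P x)%E.
Proof.
move=> OU_ne; apply: lee_EFinD_gt => e Qx_lt.
by apply: ereal_inf_lbound; exists e; split=> //; apply: relax_feas_gt_Qval.
Qed.

Lemma relax_val_le_wstar :
    (forall x, inX P x -> (relax_val_at P SS x <= (sc (tc1 P *m x))%:E + Qval P x)%E) ->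
  (relax_val P SS <= wstar P)%E.
Proof.
move=> at_le; apply: le_ereal_inf_tmp => _ [x [xX ->]].
apply: le_trans (at_le x xX).
by apply: ereal_inf_le_tmp => _ [e [e_feas ->]]; exists x, e.
Qed.

End Relaxation.

Theorem corollary24 (R : realType) (nx mx nu ny my p q r : nat)
  (P : tsro_data R nx mx nu ny my p q r)
  (SS : set (seq ('cV[R]_my * 'cV[R]_r)))
  (HYd : forall y, y \in tYd P -> forall i, y i 0 \is a Num.nat)
  (HU : forall x, inX P x ->
     (exists u, inU P x u) /\
     (exists M : R, forall u, inU P x u -> forall i, `|u i 0| <= M))
  (Hstand : standing P)
  (HSS : forall S, SS S -> valid_coll P S) :
  (forall x, inX P x ->
     (relax_val_at P SS x <= (sc (tc1 P *m x))%:E + Qval P x)%E) /\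
  (relax_val P SS <= wstar P)%E.
Proof.
have at_le x : inX P x -> (relax_val_at P SS x <= (sc (tc1 P *m x))%:E + Qval P x)%E.
  move=> xX; have [U_ne U_bd] := HU x xX.
  by apply: relax_val_at_le => S /HSS[S_gt0 _]; apply: inOU_exists.
by split=> //; apply: relax_val_le_wstar.
Qed.
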